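(* Let $\mathbf L\in\mathbb R_+^{n\times k}$ and let $\boldsymbol\psi:\mathcal C\to\mathbb R_+^n$ be $\mathbf L$-calibrated. Then for every sequence $\{\mathbf z_m\}$ of points in $\mathcal S_\psi$ there exists $t\in[k]$ such that $\mathcal N^\psi(\{\mathbf z_m\})\subseteq\mathcal Q^{\mathbf L}_t$.
   Context: Notation: $[m]=\{1,\dots,m\}$; $\Delta_n=\{\mathbf p\in\mathbb R_+^n:\sum_i p_i=1\}$. A loss matrix $\mathbf L\in\mathbb R_+^{n\times k}$ has columns $\boldsymbol\ell_t$, $t\in[k]$. Standing assumption: for each $t\in[k]$ there is $\mathbf p\in\Delta_n$ with $\operatorname{argmin}_{t'}\mathbf p^\top\boldsymbol\ell_{t'}=\{t\}$. A surrogate loss is $\boldsymbol\psi:\mathcal C\to\mathbb R_+^n$ with $\mathcal C\subseteq\mathbb R^d$ convex; $\mathcal R_\psi=\boldsymbol\psi(\mathcal C)$, $\mathcal S_\psi=\operatorname{conv}(\mathcal R_\psi)$. $\boldsymbol\psi$ is $\mathbf L$-calibrated if there is $\mathrm{pred}:\mathcal C\to[k]$ such that for all $\mathbf p\in\Delta_n$: $\inf_{\mathbf u\in\mathcal C:\mathrm{pred}(\mathbf u)\notin\operatorname{argmin}_t\mathbf p^\top\boldsymbol\ell_t}\mathbf p^\top\boldsymbol\psi(\mathbf u)>\inf_{\mathbf u\in\mathcal C}\mathbf p^\top\boldsymbol\psi(\mathbf u)$. Trigger probability set: $\mathcal Q^{\mathbf L}_t=\{\mathbf p\in\Delta_n: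 t\in\operatorname{argmin}_{t'\in[k]}\mathbf p^\top\boldsymbol\ell_{t'}\}$. Positive normal set at a sequence $\{\mathbf z_m\}$ in $\mathcal S_\psi$: $\mathcal N^\psi(\{\mathbf z_m\})=\{\mathbf p\in\Delta_n:\lim_{m\to\infty}\mathbf p^\top\mathbf z_m\text{ exists and equals }\inf_{\mathbf z'\in\mathcal S_\psi}\mathbf p^\top\mathbf z'\}$. *)

From Stdlib Require Import Reals List.
Import ListNotations.
Open Scope R_scope.

(* Vectors of R^n are modelled as functions nat -> R; only indices < n are
   meaningful (vectors of R^n are required to vanish at indices >= n where a
   canonical representative is needed). *)
Definition vec := nat -> R.

Fixpoint dot (n : nat) (p z : vec) : R :=
  match n with
  | O => 0
  | S m => dot m p z + p m * z m
  end.

Definition in_Rn_plus (n : nat) (z : vec) : Prop :=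
  (forall i, (i < n)%nat -> 0 <= z i) /\ (forall i, (n <= i)%nat -> z i = 0).

Definition simplex (n : nat) (p : vec) : Prop :=
  in_Rn_plus n p /\ dot n p (fun _ => 1) = 1.

Definition convex_set (d : nat) (C : vec -> Prop) : Prop :=
  (forall u, C u -> forall i, (d <= i)%nat -> u i = 0) /\
  (forall u v (lam : R), C u -> C v -> 0 <= lam <= 1 ->
     C (fun i => lam * u i + (1 - lam) * v i)).

Definition is_inf (A : R -> Prop) (m : R) : Prop :=
  (forall a, A a -> m <= a) /\ (forall b, (forall a, A a -> b <= a) -> b <= m).

Definition range_psi (C : vec -> Prop) (psi : vec -> vec) (z : vec) : Prop :=
  exists u, C u /\ z = psi u.

Definition conv (A : vec -> Prop) (z : vec) : Prop :=
  exists l : list (R * vec),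
    (forall wx, In wx l -> 0 <= fst wx /\ A (snd wx)) /\
    fold_right (fun wx s => fst wx + s) 0 l = 1 /\
    (forall i, z i = fold_right (fun wx s => fst wx * snd wx i + s) 0 l).

Definition S_psi (C : vec -> Prop) (psi : vec -> vec) : vec -> Prop :=
  conv (range_psi C psi).

Definition col (L : nat -> nat -> R) (t : nat) : vec := fun i => L i t.

(* t in argmin_{t' in [k]} p^T l_t' (indices of [k] are 0..k-1). *)
Definition in_argmin (n k : nat) (L : nat -> nat -> R) (p : vec) (t : nat) : Prop :=
  (t < k)%nat /\ forall t', (t' < k)%nat -> dot n p (col L t) <= dot n p (col L t').

Definition loss_matrix (n k : nat) (L : nat -> nat -> R) : Prop :=
  (forall i t, (i < n)%nat -> (t < k)%nat -> 0 <= L i t) /\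
  (forall t, (t < k)%nat -> exists p, simplex n p /\
      forall t', in_argmin n k L p t' <-> t' = t).

(* psi is L-calibrated: there is pred : C -> [k] such that for all p in Delta_n,
   inf_{u in C, pred u notin argmin} p.psi(u) > inf_{u in C} p.psi(u)
   (an infimum over the empty set being +infinity). *)
Definition calibrated (n k : nat) (L : nat -> nat -> R)
    (C : vec -> Prop) (psi : vec -> vec) : Prop :=
  exists pred : vec -> nat,
    (forall u, C u -> (pred u < k)%nat) /\
    forall p, simplex n p ->
      exists m, is_inf (fun a => exists u, C u /\ a = dot n p (psi u)) m /\
        ((forall u, C u -> in_argmin n k L p (pred u)) \/
         exists mA, is_inf (fun a => exists u, C u /\ ~ in_argmin n k L p (pred u)
                                        /\ a = dot n p (psi u)) mA /\ m < mA).

Definition trigger (n k : nat) (L : nat -> nat -> R) (t : nat) (p : vec) : Prop :=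
  simplex n p /\ in_argmin n k L p t.

Definition pos_normal (n : nat) (C : vec -> Prop) (psi : vec -> vec)
    (z : nat -> vec) (p : vec) : Prop :=
  simplex n p /\
  exists l, Un_cv (fun m => dot n p (z m)) l /\
    is_inf (fun a => exists z', S_psi C psi z' /\ a = dot n p z') l.

(* Write each z_m as a convex combination of points psi(u) and sort the weights
   by the predicted label pred(u) in [k]; some label t carries weight at least
   1/k in infinitely many z_m.  If p lies in the positive normal set but t is
   not optimal for p, calibration gives a gap delta > 0 between the infimum of
   p.psi over C and its values at the u with pred(u) = t.  Along those z_m,
   p.z_m then stays at least delta/k above that infimum, while it converges to
   the infimum of p over S_psi, which is no larger. *)
From Stdlib Require Import Reals List Lra Lia Classical.
Open Scope R_scope.

Section WeightedSum.

Context {A : Type}.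

Definition weight_total (l : list (R * A)) : R :=
  fold_right (fun wx s => fst wx + s) 0 l.

Definition weighted_sum (f : A -> R) (l : list (R * A)) : R :=
  fold_right (fun wx s => fst wx * f (snd wx) + s) 0 l.

Lemma weighted_sum_add (f g : A -> R) l :
  weighted_sum (fun x => f x + g x) l = weighted_sum f l + weighted_sum g l.
Proof. induction l as [|a l IH]; simpl; [lra | rewrite IH; ring]. Qed.

Lemma weighted_sum_scale (c : R) (f : A -> R) l :
  weighted_sum (fun x => c * f x) l = c * weighted_sum f l.
Proof. induction l as [|a l IH]; simpl; [ring | rewrite IH; ring]. Qed.

Lemma weighted_sum_const (c : R) l : weighted_sum (fun _ => c) l = c * weight_total l.
Proof. induction l as [|a l IH]; simpl; [ring | rewrite IH; ring]. Qed.

Lemma weighted_sum_ext_in (f g : A -> R) l :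
  (forall wx, In wx l -> f (snd wx) = g (snd wx)) -> weighted_sum f l = weighted_sum g l.
Proof.
  induction l as [|a l IH]; simpl; intros H; [reflexivity|].
  rewrite (H a (or_introl eq_refl)), IH; [reflexivity|].
  intros wx hin; apply H; right; exact hin.
Qed.

Lemma weighted_sum_le (f g : A -> R) l :
  (forall wx, In wx l -> 0 <= fst wx /\ f (snd wx) <= g (snd wx)) ->
  weighted_sum f l <= weighted_sum g l.
Proof.
  induction l as [|a l IH]; simpl; intros H; [lra|].
  destruct (H a (or_introl eq_refl)) as [ha hfg].
  assert (weighted_sum f l <= weighted_sum g l) by (apply IH; auto).
  assert (fst a * f (snd a) <= fst a * g (snd a)) by (apply Rmult_le_compat_l; auto).
  unfold weighted_sum in *; lra.
Qed.

End WeightedSum.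

Lemma weighted_sum_map {A B : Type} (h : A -> B) (g : B -> R) l :
  weighted_sum g (map (fun wx => (fst wx, h (snd wx))) l) = weighted_sum (fun x => g (h x)) l.
Proof. induction l as [|a l IH]; simpl; [reflexivity | rewrite IH; reflexivity]. Qed.

Lemma weight_total_map {A B : Type} (h : A -> B) l :
  weight_total (map (fun wx => (fst wx, h (snd wx))) l) = weight_total l.
Proof. induction l as [|a l IH]; simpl; [reflexivity | rewrite IH; reflexivity]. Qed.

Lemma map_snd_lift {A B : Type} (h : A -> B) (Q : A -> Prop) (l : list (R * B)) :
  (forall wy, In wy l -> exists a, Q a /\ snd wy = h a) ->
  exists l', (forall wx, In wx l' -> Q (snd wx)) /\
    map (fun wx => (fst wx, h (snd wx))) l' = l.
Proof.
  induction l as [|[w y] l IH]; intros H.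
  - exists nil; split; [intros _ [] | reflexivity].
  - destruct (H (w, y) (or_introl eq_refl)) as [a [ha e]]; simpl in e; subst y.
    destruct IH as [l' [hl' <-]]; [intros wy hin; apply H; right; exact hin|].
    exists ((w, a) :: l'); split; [|reflexivity].
    intros wx [<- | hin]; [exact ha | exact (hl' wx hin)].
Qed.

Fixpoint sum_lt (k : nat) (f : nat -> R) : R :=
  match k with O => 0 | S j => sum_lt j f + f j end.

Lemma weighted_sum_sum_lt {A : Type} k (f : nat -> A -> R) l :
  weighted_sum (fun x => sum_lt k (fun t => f t x)) l = sum_lt k (fun t => weighted_sum (f t) l).
Proof.
  induction k as [|k IH]; simpl.
  - rewrite weighted_sum_const; ring.
  - rewrite weighted_sum_add, IH; reflexivity.
Qed.

Lemma sum_lt_le_mul_max k f :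
  (0 < k)%nat -> exists t, (t < k)%nat /\ sum_lt k f <= INR k * f t.
Proof.
  induction k as [|k IH]; intros hk; [lia|].
  destruct (Nat.eq_dec k 0) as [->|hk0].
  - exists 0%nat; simpl; split; [lia | lra].
  - destruct IH as [t [ht hsum]]; [lia|].
    rewrite S_INR; simpl.
    destruct (Rle_lt_dec (f k) (f t)).
    + exists t; split; [lia | nra].
    + exists k; split; [lia|].
      assert (INR k * f t <= INR k * f k) by (apply Rmult_le_compat_l; [apply pos_INR | lra]).
      lra.
Qed.

Definition class_indicator {A : Type} (cls : A -> nat) (t : nat) (x : A) : R :=
  if Nat.eq_dec (cls x) t then 1 else 0.

Definition class_weight {A : Type} (cls : A -> nat) (t : nat) (l : list (R * A)) : R :=
  weighted_sum (class_indicator cls t) l.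

Lemma sum_lt_class_indicator {A : Type} (cls : A -> nat) k x :
  (cls x < k)%nat -> sum_lt k (fun t => class_indicator cls t x) = 1.
Proof.
  assert (hsplit : forall j, sum_lt j (fun t => class_indicator cls t x) =
                             if Nat.ltb (cls x) j then 1 else 0).
  { unfold class_indicator; induction j as [|j IH]; simpl; [reflexivity|].
    rewrite IH.
    destruct (Nat.ltb_spec (cls x) j), (Nat.ltb_spec (cls x) (S j)),
      (Nat.eq_dec (cls x) j); try lia; lra. }
  intros hx; rewrite hsplit; destruct (Nat.ltb_spec (cls x) k); [reflexivity | lia].
Qed.

Lemma class_weight_pigeonhole {A : Type} (cls : A -> nat) k l :
  (forall wx, In wx l -> cls (snd wx) < k)%nat -> weight_total l = 1 ->
  exists t, (t < k)%nat /\ / INR k <= class_weight cls t l.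
Proof.
  intros hcls htot.
  assert (hsum : sum_lt k (fun t => class_weight cls t l) = 1).
  { unfold class_weight; rewrite <- weighted_sum_sum_lt, <- htot, <- (Rmult_1_l (weight_total l)),
      <- weighted_sum_const.
    apply weighted_sum_ext_in; intros wx hin; apply sum_lt_class_indicator, hcls, hin. }
  destruct k as [|k]; [simpl in hsum; lra|].
  destruct (sum_lt_le_mul_max (S k) (fun t => class_weight cls t l)) as [t [ht hle]]; [lia|].
  exists t; split; [exact ht|].
  assert (hk : 0 < INR (S k)) by (apply lt_0_INR; lia).
  apply (Rmult_le_reg_l (INR (S k))); [exact hk|].
  rewrite Rinv_r by lra; lra.
Qed.

Lemma weighted_sum_ge_class {A : Type} (cls : A -> nat) t (f : A -> R) (m0 delta : R) l :
  (forall wx, In wx l ->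
     0 <= fst wx /\ m0 <= f (snd wx) /\ (cls (snd wx) = t -> m0 + delta <= f (snd wx))) ->
  m0 * weight_total l + delta * class_weight cls t l <= weighted_sum f l.
Proof.
  intros H.
  unfold class_weight; rewrite <- weighted_sum_scale, <- weighted_sum_const, <- weighted_sum_add.
  apply weighted_sum_le; intros wx hin.
  destruct (H wx hin) as [hw [hm hgap]]; split; [exact hw|].
  unfold class_indicator; destruct (Nat.eq_dec (cls (snd wx)) t) as [e|_].
  - specialize (hgap e); lra.
  - lra.
Qed.

Lemma dot_ext n p x y : (forall i, x i = y i) -> dot n p x = dot n p y.
Proof. intros H; induction n as [|n IH]; simpl; [reflexivity | rewrite IH, H; reflexivity]. Qed.

Lemma dot_weighted_sum {A : Type} n p (g : A -> vec) l :
  dot n p (fun i => weighted_sum (fun x => g x i) l) = weighted_sum (fun x => dot n p (g x)) l.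
Proof.
  induction n as [|n IH]; simpl.
  - rewrite weighted_sum_const; ring.
  - rewrite IH, weighted_sum_add, weighted_sum_scale; reflexivity.
Qed.

Lemma is_inf_le_of_subset (A B : R -> Prop) (a b : R) :
  (forall x, A x -> B x) -> is_inf B b -> is_inf A a -> b <= a.
Proof. intros hAB [hb _] [_ ha]; apply ha; intros x hx; apply hb, hAB, hx. Qed.

(* Weights are attached to preimages u rather than to the points psi u, so that
   the label pred u of an entry is well defined. *)
Definition convex_preimage (C : vec -> Prop) (psi : vec -> vec) (z : vec)
    (l : list (R * vec)) : Prop :=
  (forall wu, In wu l -> 0 <= fst wu /\ C (snd wu)) /\
  weight_total l = 1 /\ forall i, z i = weighted_sum (fun u => psi u i) l.

Lemma S_psi_convex_preimage C psi z :
  S_psi C psi z -> exists l, convex_preimage C psi z l.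
Proof.
  intros [l0 [hl0 [htot hz]]].
  destruct (map_snd_lift psi C l0) as [l [hC <-]].
  { intros wy hin; destruct (proj2 (hl0 wy hin)) as [u [hu e]]; exists u; auto. }
  exists l; split; [|split].
  - intros wu hin; split; [|exact (hC wu hin)].
    apply (hl0 (fst wu, psi (snd wu))), in_map_iff; exists wu; auto.
  - rewrite <- htot; symmetry; apply weight_total_map.
  - intros i; rewrite hz; exact (weighted_sum_map psi (fun x => x i) l).
Qed.

Lemma S_psi_heavy_class k C psi (pred : vec -> nat) z :
  (forall u, C u -> (pred u < k)%nat) -> S_psi C psi z ->
  exists t, (t < k)%nat /\
    exists l, convex_preimage C psi z l /\ / INR k <= class_weight pred t l.
Proof.
  intros hpred hz; destruct (S_psi_convex_preimage C psi z hz) as [l hl].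
  destruct (class_weight_pigeonhole pred k l) as [t [ht hw]].
  - intros wu hin; apply hpred, (proj1 hl wu hin).
  - exact (proj1 (proj2 hl)).
  - exists t; split; [exact ht|]; exists l; auto.
Qed.

Lemma S_psi_psi C psi u : C u -> S_psi C psi (psi u).
Proof.
  intros hu; exists ((1, psi u) :: nil); simpl; split; [|split].
  - intros wx [<- | []]; split; [simpl; lra | exists u; auto].
  - lra.
  - intros i; lra.
Qed.

Lemma convex_preimage_dot_ge_class n C psi (cls : vec -> nat) t p z l (m0 delta : R) :
  convex_preimage C psi z l ->
  (forall u, C u -> m0 <= dot n p (psi u)) ->
  (forall u, C u -> cls u = t -> m0 + delta <= dot n p (psi u)) ->
  m0 + delta * class_weight cls t l <= dot n p z.
Proof.
  intros [hl [htot hz]] hm0 hgap.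
  rewrite (dot_ext n p z _ hz), dot_weighted_sum.
  rewrite <- (Rmult_1_r m0), <- htot.
  apply weighted_sum_ge_class; intros wu hin.
  destruct (hl wu hin) as [hw hu]; auto.
Qed.

Lemma frequently_of_finite_choice k (P : nat -> nat -> Prop) :
  (forall m, exists t, (t < k)%nat /\ P m t) ->
  exists t, (t < k)%nat /\ forall N, exists m, (N <= m)%nat /\ P m t.
Proof.
  intros hP; apply NNPP; intros hnot.
  assert (hev : forall j, (j <= k)%nat ->
            exists N, forall t, (t < j)%nat -> forall m, (N <= m)%nat -> ~ P m t).
  { induction j as [|j IH]; intros hj.
    - exists 0%nat; intros t ht; lia.
    - destruct IH as [N1 H1]; [lia|].
      assert (hj' : exists N, forall m, (N <= m)%nat -> ~ P m j).
      { apply NNPP; intros hj'; apply hnot; exists j; split; [lia|].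
        intros N; apply NNPP; intros hN; apply hj'; exists N.
        intros m hm hPm; apply hN; exists m; auto. }
      destruct hj' as [N2 H2]; exists (Nat.max N1 N2).
      intros t ht m hm; destruct (Nat.eq_dec t j) as [->|ne].
      + apply H2; lia.
      + apply H1; lia. }
  destruct (hev k (le_n k)) as [N HN].
  destruct (hP N) as [t [ht hPt]]; exact (HN t ht N (le_n N) hPt).
Qed.

Lemma Un_cv_not_frequently_above (u : nat -> R) (lim c eps : R) :
  Un_cv u lim -> lim <= c -> 0 < eps ->
  ~ (forall N, exists m, (N <= m)%nat /\ c + eps <= u m).
Proof.
  intros hcv hc heps hfreq.
  destruct (hcv eps heps) as [N HN]; destruct (hfreq N) as [m [hm hle]].
  specialize (HN m hm); unfold R_dist in HN; apply Rabs_def2 in HN; lra.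
Qed.

(* [calibrated n k L C psi] unfolds to
   [exists pred, (forall u, C u -> pred u < k) /\ calibrated_by n k L C psi pred]. *)
Definition calibrated_by (n k : nat) (L : nat -> nat -> R) (C : vec -> Prop)
    (psi : vec -> vec) (pred : vec -> nat) : Prop :=
  forall p, simplex n p ->
    exists m, is_inf (fun a => exists u, C u /\ a = dot n p (psi u)) m /\
      ((forall u, C u -> in_argmin n k L p (pred u)) \/
       exists mA, is_inf (fun a => exists u, C u /\ ~ in_argmin n k L p (pred u)
                                      /\ a = dot n p (psi u)) mA /\ m < mA).

Lemma calibrated_by_gap n k L C psi pred p t :
  calibrated_by n k L C psi pred -> simplex n p -> ~ in_argmin n k L p t ->
  exists m0 delta, 0 < delta /\
    is_inf (fun a => exists u, C u /\ a = dot n p (psi u)) m0 /\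
    forall u, C u -> pred u = t -> m0 + delta <= dot n p (psi u).
Proof.
  intros hcal hp ht.
  destruct (hcal p hp) as [m [hm [hall | [mA [hmA hlt]]]]].
  - exists m, 1; split; [lra | split; [exact hm|]].
    intros u hu <-; exfalso; exact (ht (hall u hu)).
  - exists m, (mA - m); split; [lra | split; [exact hm|]].
    intros u hu <-; replace (m + (mA - m)) with mA by ring.
    apply (proj1 hmA); exists u; auto.
Qed.

Theorem mainTheorem4 (n k d : nat) (L : nat -> nat -> R)
    (C : vec -> Prop) (psi : vec -> vec)
    (hL : loss_matrix n k L)
    (hC : convex_set d C)
    (hpsi : forall u, C u -> in_Rn_plus n (psi u))
    (hcal : calibrated n k L C psi)
    (z : nat -> vec) (hz : forall m, S_psi C psi (z m)) :
  exists t, (t < k)%nat /\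
    forall p, pos_normal n C psi z p -> trigger n k L t p.
Proof.
  destruct hcal as [pred [hpred hcal]].
  destruct (frequently_of_finite_choice k _ (fun m => S_psi_heavy_class k C psi pred (z m) hpred (hz m)))
    as [t [ht hfreq]].
  exists t; split; [exact ht|].
  intros p [hp [lim [hcv hlim]]]; split; [exact hp|].
  apply NNPP; intros hnot.
  destruct (calibrated_by_gap n k L C psi pred p t hcal hp hnot) as [m0 [delta [hdelta [hm0 hgap]]]].
  assert (hlim_le : lim <= m0).
  { apply (is_inf_le_of_subset _ _ _ _) with (3 := hm0) (2 := hlim).
    intros a [u [hu ->]]; exists (psi u); split; [apply S_psi_psi, hu | reflexivity]. }
  assert (hk : 0 < / INR k) by (apply Rinv_0_lt_compat, lt_0_INR; lia).
  apply (Un_cv_not_frequently_above _ lim m0 (delta * / INR k) hcv hlim_le); [nra|].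
  intros N; destruct (hfreq N) as [m [hm [l [hl hw]]]]; exists m; split; [exact hm|].
  eapply Rle_trans; [|apply (convex_preimage_dot_ge_class n C psi pred t p (z m) l m0 delta hl)].
  - apply Rplus_le_compat_l, Rmult_le_compat_l; lra.
  - intros u hu; apply (proj1 hm0); exists u; auto.
  - exact hgap.
Qed.
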